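(* Let $\alpha\ge4$ and $B>1$. Let $\mathcal{F}=A_n\circ\cdots\circ A_0$ be a deep learning model in which every block $A_i$ is either a basic block or a residual block, with approximate model $\mathcal{F}^\alpha=A_n^\alpha\circ\cdots\circ A_0^\alpha$. Here a basic block is one of: a linear block $A(\mathbf{x})=\mathbf{A}\mathbf{x}+\mathbf{b}$ (approximation $A^\alpha=A$); a ReLU block (coordinatewise $\max(x,0)$, approximated by applying $\tilde r_{\alpha,B}$ coordinatewise); a max-pooling block with kernel size $k_0\le10$ (each output coordinate the max of a window of $k_0^2$ inputs, approximated by applying $\tilde M_{\alpha,k_0^2,B}$ to each window); or a softmax block $A(\mathbf{x})=(\exp(x_i)/\sum_j\exp(x_j))_i$ (approximation $A^\alpha=A$). A residual block is $R(\mathbf{x})=\mathcal{G}(\mathbf{x})+\mathbf{P}\mathbf{x}$, where $\mathcal{G}$ is a composition of basic blocks and $\mathbf{P}$ is a matrix, with approximation $R^\alpha(\mathbf{x})=\mathcal{G}^\alpha(\mathbf{x})+\mathbf{P}\mathbf{x}$, $\mathcal{G}^\alpha$ being the composition of the approximations of the basic blocks of $\mathcal{G}$. Assume that all inputs to all blocks (including the blocks inside residual blocks), in both the original and the approximate model, have infinity norm at most $B$ for every input $\mathbf{x}$ considered. Then there exists a constant $C$, determined only by the model parameters (and independent of $\alpha$), such that $\|\mathcal{F}^\alpha(\mathbf{x})-\mathcal{F}(\mathbf{x})\|_\infty\le C2^{-\alpha}$ for every such input $\mathbf{x}$.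
   Context: Let $p_\alpha$ be a polynomial such that $m_\alpha(a,b)=\frac{(a+b)+(a-b)p_\alpha(a-b)}{2}$ satisfies $|m_\alpha(a,b)-\max(a,b)|\le2^{-\alpha}$ for all $a,b\in[0,1]$. Define $r_\alpha(x)=\frac{x+xp_\alpha(x)}{2}$ and $\tilde r_{\alpha,B}(x)=B\,r_\alpha(x/B)$. Define $M_{\alpha,1}(x_1)=x_1$, $M_{\alpha,2k}(x_1,\dots,x_{2k})=m_\alpha(M_{\alpha,k}(x_1,\dots,x_k),M_{\alpha,k}(x_{k+1},\dots,x_{2k}))$, $M_{\alpha,2k+1}(x_1,\dots,x_{2k+1})=m_\alpha(M_{\alpha,k}(x_1,\dots,x_k),M_{\alpha,k+1}(x_{k+1},\dots,x_{2k+1}))$, and $\tilde M_{\alpha,n,B}(x_1,\dots,x_n)=B'\big(M_{\alpha,n}(\tfrac{x_1}{B'}+0.5,\dots,\tfrac{x_n}{B'}+0.5)-0.5\big)$ with $B'=B/(0.5-(\lceil\log_2 n\rceil-1)2^{-\alpha})$. *)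

From HB Require Import structures.
From mathcomp Require Import all_boot all_order all_algebra.
From mathcomp Require Import reals sequences exp.
Set Implicit Arguments. Unset Strict Implicit. Unset Printing Implicit Defensive.
Import Order.TTheory GRing.Theory Num.Theory.
Local Open Scope ring_scope.

Section Defs.
Variable R : realType.

Definition normInf n (x : 'cV[R]_n) : R := \big[Num.max/0]_(i < n) `|x i 0|.

(* Basic blocks: linear, ReLU, max-pooling with kernel size k0 (1 <= k0 <= 10),
   whose j-th output is the max over the window (w j 0, ..., w j (k0^2-1))
   of input coordinates, and softmax. *)
Inductive basic : nat -> nat -> Type :=
| BLinear m n (A : 'M[R]_(n, m)) (b : 'cV[R]_n) : basic m n
| BReLU n : basic n n
| BMaxPool p q (k0 : nat) (hk : (0 < k0 <= 10)%N)
    (w : 'I_q -> 'I_(k0 ^ 2) -> 'I_p) : basic p q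
| BSoftmax n : basic n n.

(* nonempty compositions; the first element is applied first *)
Inductive chain (T : nat -> nat -> Type) : nat -> nat -> Type :=
| COne m n (b : T m n) : chain T m n
| CCons m k n (b : T m k) (c : chain T k n) : chain T m n.

Inductive block : nat -> nat -> Type :=
| Basic m n (b : basic m n) : block m n
| Residual m n (G : chain basic m n) (P : 'M[R]_(n, m)) : block m n.

Definition model := chain block.

Fixpoint chain_eval T (f : forall m n, T m n -> 'cV[R]_m -> 'cV[R]_n)
  m n (c : chain T m n) : 'cV[R]_m -> 'cV[R]_n :=
  match c with
  | COne _ _ b => f _ _ b
  | CCons _ _ _ b c' => fun x => chain_eval f c' (f _ _ b x)
  end.

(* ok b x : the inputs of block b (and of its sub-blocks) on input x are fine *)
Fixpoint chain_ok T (f : forall m n, T m n -> 'cV[R]_m -> 'cV[R]_n)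
  (ok : forall m n, T m n -> 'cV[R]_m -> Prop)
  m n (c : chain T m n) : 'cV[R]_m -> Prop :=
  match c with
  | COne _ _ b => fun x => ok _ _ b x
  | CCons _ _ _ b c' => fun x => ok _ _ b x /\ chain_ok f ok c' (f _ _ b x)
  end.

Definition seqmax (s : seq R) : R := foldr Num.max (head 0 s) s.

Definition window p q k0 (w : 'I_q -> 'I_(k0 ^ 2) -> 'I_p) (x : 'cV[R]_p)
  (j : 'I_q) : seq R := [seq x (w j i) 0 | i <- enum 'I_(k0 ^ 2)].

Definition softmax n (x : 'cV[R]_n) : 'cV[R]_n :=
  \col_i (expR (x i 0) / \sum_(j < n) expR (x j 0)).

Definition basic_eval m n (b : basic m n) : 'cV[R]_m -> 'cV[R]_n :=
  match b with
  | BLinear _ _ A c => fun x => A *m x + c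
  | BReLU _ => fun x => \col_i Num.max (x i 0) 0
  | BMaxPool _ _ k0 _ w => fun x => \col_j seqmax (window w x j)
  | BSoftmax _ => fun x => softmax x
  end.

Definition block_eval m n (b : block m n) : 'cV[R]_m -> 'cV[R]_n :=
  match b with
  | Basic _ _ b => basic_eval b
  | Residual _ _ G P => fun x => chain_eval basic_eval G x + P *m x
  end.

Definition model_eval m n (F : model m n) := chain_eval block_eval F.

Variable pa : nat -> {poly R}.

Definition m_alpha (a : nat) (x y : R) : R :=
  ((x + y) + (x - y) * (pa a).[x - y]) / 2.

Definition r_alpha (a : nat) (x : R) : R := (x + x * (pa a).[x]) / 2.

Definition rt_alpha (a : nat) (B x : R) : R := B * r_alpha a (x / B).

Fixpoint Mtree (a : nat) (fuel : nat) (s : seq R) : R :=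
  match fuel with
  | 0%N => head 0 s
  | fuel'.+1 =>
      if (size s <= 1)%N then head 0 s
      else m_alpha a (Mtree a fuel' (take (size s)./2 s))
                     (Mtree a fuel' (drop (size s)./2 s))
  end.

Definition M_alpha (a : nat) (s : seq R) : R := Mtree a (size s) s.

(* tilde M_{alpha,n,B}, with ceil(log2 n) = up_log 2 n *)
Definition Mt_alpha (a n : nat) (B : R) (s : seq R) : R :=
  let B' := B / (2^-1 - ((up_log 2 n)%:R - 1) * 2 ^- a) in
  B' * (M_alpha a [seq y / B' + 2^-1 | y <- s] - 2^-1).

Definition basic_approx (a : nat) (B : R) m n (b : basic m n)
  : 'cV[R]_m -> 'cV[R]_n :=
  match b with
  | BLinear _ _ A c => fun x => A *m x + c
  | BReLU _ => fun x => \col_i rt_alpha a B (x i 0)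
  | BMaxPool _ _ k0 _ w => fun x => \col_j Mt_alpha a (k0 ^ 2) B (window w x j)
  | BSoftmax _ => fun x => softmax x
  end.

Definition block_approx (a : nat) (B : R) m n (b : block m n)
  : 'cV[R]_m -> 'cV[R]_n :=
  match b with
  | Basic _ _ b => basic_approx a B b
  | Residual _ _ G P => fun x => chain_eval (basic_approx a B) G x + P *m x
  end.

Definition model_approx (a : nat) (B : R) m n (F : model m n) :=
  chain_eval (block_approx a B) F.

Definition basic_ok (B : R) m n (b : basic m n) (x : 'cV[R]_m) : Prop :=
  normInf x <= B.

Definition block_ok_exact (B : R) m n (b : block m n) : 'cV[R]_m -> Prop :=
  match b with
  | Basic _ _ _ => fun x => normInf x <= B
  | Residual _ _ G _ => fun x => chain_ok basic_eval (basic_ok B) G x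
  end.

Definition block_ok_approx (a : nat) (B : R) m n (b : block m n)
  : 'cV[R]_m -> Prop :=
  match b with
  | Basic _ _ _ => fun x => normInf x <= B
  | Residual _ _ G _ => fun x => chain_ok (basic_approx a B) (basic_ok B) G x
  end.

Definition inputs_bounded_exact (B : R) m n (F : model m n) x :=
  chain_ok block_eval (block_ok_exact B) F x.

Definition inputs_bounded_approx (a : nat) (B : R) m n (F : model m n) x :=
  chain_ok (block_approx a B) (block_ok_approx a B) F x.

End Defs.

(* Every block approximation is stable: on bounded inputs,
   |A^a x' - A x| <= K |x' - x| + E 2^-a with K and E independent of a, and
   such estimates compose along a chain of blocks (with K2 K1 and K2 E1 + E2).
   Linear and softmax blocks are exact and Lipschitz, and a residual block only
   adds a linear term. For ReLU, max t 0 = B max (t/B) 0 and r_a is a single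
   application of m_a. For max pooling, the rescaling by B' maps the window into
   [(L-1) 2^-a, 1 - (L-1) 2^-a] with L = ceil(log2 k0^2) <= 7, so every node of
   the depth-L tree of m_a receives arguments in [0, 1], and the errors add up
   to L 2^-a. Comparing both models on the same input (x' = x) gives the
   bound. *)

From HB Require Import structures.
From mathcomp Require Import all_boot all_order all_algebra.
From mathcomp Require Import reals sequences exp.
From mathcomp Require Import ring lra zify.
Import Order.TTheory GRing.Theory Num.Theory.
Set Implicit Arguments. Unset Strict Implicit. Unset Printing Implicit Defensive.
Local Open Scope ring_scope.

Lemma max_dist (R : realDomainType) (x y x' y' e : R) :
  `|x - x'| <= e -> `|y - y'| <= e -> `|Num.max x y - Num.max x' y'| <= e.
Proof.
rewrite !ler_norml => /andP[? ?] /andP[? ?].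
by rewrite !maxEle; case: ifP => ?; case: ifP => ?; apply/andP; split; lra.
Qed.

Lemma exp2N_le16 (R : realFieldType) a : (4 <= a)%N -> 2 ^- a <= 16^-1 :> R.
Proof.
move=> a_ge4; rewrite -exprVn.
have -> : 16^-1 = (2^-1) ^+ 4 :> R.
  by rewrite !exprS expr0 mulr1 -!invfM; congr (_^-1); ring.
by apply: ler_wiXn2l => //; lra.
Qed.

Section SupNorm.
Variable R : realType.

Lemma normInf_ge0 n (x : 'cV[R]_n) : 0 <= normInf x.
Proof. by rewrite /normInf; elim/big_ind: _ => // u v u0 v0; rewrite le_max u0. Qed.

Lemma normInf_ge_coord n (x : 'cV[R]_n) i : `|x i 0| <= normInf x.
Proof. exact: le_bigmax. Qed.

Lemma normInf_ge_coordB n (x y : 'cV[R]_n) i : `|x i 0 - y i 0| <= normInf (x - y).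
Proof. by have := normInf_ge_coord (x - y) i; rewrite !mxE. Qed.

Lemma normInf_le n (x : 'cV[R]_n) c :
  0 <= c -> (forall i, `|x i 0| <= c) -> normInf x <= c.
Proof. by move=> c0 xc; apply: bigmax_le. Qed.

Lemma normInf0 n : normInf (0 : 'cV[R]_n) = 0.
Proof.
by apply/le_anti; rewrite normInf_ge0 andbT; apply: normInf_le => // i; rewrite mxE normr0.
Qed.

Lemma normInfD n (x y : 'cV[R]_n) : normInf (x + y) <= normInf x + normInf y.
Proof.
apply: normInf_le => [|i]; first by rewrite addr_ge0 ?normInf_ge0.
by rewrite mxE (le_trans (ler_normD _ _)) // lerD ?normInf_ge_coord.
Qed.

Definition mx_abs_sum m n (A : 'M[R]_(n, m)) : R := \sum_i \sum_j `|A i j|.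

Lemma mx_abs_sum_ge0 m n (A : 'M[R]_(n, m)) : 0 <= mx_abs_sum A.
Proof. by apply: sumr_ge0 => i _; apply: sumr_ge0. Qed.

Lemma normInf_mulmx m n (A : 'M[R]_(n, m)) v :
  normInf (A *m v) <= mx_abs_sum A * normInf v.
Proof.
apply: normInf_le => [|i]; first by rewrite mulr_ge0 ?mx_abs_sum_ge0 ?normInf_ge0.
rewrite mxE (le_trans (ler_norm_sum _ _ _)) //.
apply: le_trans (_ : \sum_j `|A i j| * normInf v <= _).
  by apply: ler_sum => j _; rewrite normrM ler_wpM2l ?normInf_ge_coord.
rewrite -mulr_suml ler_wpM2r ?normInf_ge0 // /mx_abs_sum (bigD1 i) //= lerDl.
by apply: sumr_ge0 => k _; apply: sumr_ge0.
Qed.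

End SupNorm.

Section SeqMax.
Variable R : realType.
Implicit Types (s : seq R) (x y : R).

Lemma foldr_max_ub y s x : x \in y :: s -> x <= foldr Num.max y s.
Proof.
elim: s => [|z s IH] in x *; first by rewrite inE => /eqP->.
rewrite !inE le_max => /or3P[/eqP->|/eqP->|xs]; last by rewrite IH ?inE ?xs ?orbT.
- by rewrite IH ?mem_head ?orbT.
- by rewrite lexx.
Qed.

Lemma foldr_max_mem y s : foldr Num.max y s \in y :: s.
Proof.
elim: s => [|z s IH] /=; first exact: mem_head.
rewrite maxEle; case: ifP => _; last by rewrite !inE eqxx orbT.
by move: IH; rewrite !inE => /orP[->|->]; rewrite ?orbT.
Qed.

Lemma seqmax_ub s x : x \in s -> x <= seqmax s.
Proof. by case: s => // y s xs; apply: foldr_max_ub; rewrite inE xs orbT. Qed.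

Lemma seqmax_mem s : s != [::] -> seqmax s \in s.
Proof.
case: s => // y s _; have := foldr_max_mem y (y :: s).
by rewrite /seqmax inE => /orP[/eqP->|]; rewrite ?mem_head.
Qed.

Lemma seqmax1 y : seqmax [:: y] = y.
Proof. exact: maxxx. Qed.

Lemma seqmax_eq s x : x \in s -> {in s, forall y, y <= x} -> seqmax s = x.
Proof.
move=> xs ub; apply/le_anti; rewrite seqmax_ub // ub // seqmax_mem //.
by case: s xs {ub}.
Qed.

Lemma seqmax_cat s1 s2 : s1 != [::] -> s2 != [::] ->
  seqmax (s1 ++ s2) = Num.max (seqmax s1) (seqmax s2).
Proof.
move=> s1_nil s2_nil; apply: seqmax_eq.
  by rewrite maxEle mem_cat; case: ifP; rewrite seqmax_mem ?orbT.
by move=> y; rewrite mem_cat le_max => /orP[]/seqmax_ub->; rewrite ?orbT.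
Qed.

Lemma seqmax_map_homo (f : R -> R) s : {homo f : x y / x <= y} -> s != [::] ->
  seqmax (map f s) = f (seqmax s).
Proof.
move=> f_homo s_nil; apply: seqmax_eq; first by rewrite map_f ?seqmax_mem.
by move=> _ /mapP[y ys ->]; rewrite f_homo ?seqmax_ub.
Qed.

Lemma seqmax_dist (I : eqType) (r : seq I) (f g : I -> R) e :
  r != [::] -> (forall i, `|f i - g i| <= e) ->
  `|seqmax (map f r) - seqmax (map g r)| <= e.
Proof.
have half_dist f' g' : r != [::] -> (forall i, `|f' i - g' i| <= e) ->
    seqmax (map f' r) - seqmax (map g' r) <= e.
  move=> r_nil fg; have /mapP[i ir ->] : seqmax (map f' r) \in map f' r.
    by rewrite seqmax_mem // -size_eq0 size_map size_eq0.
  have := seqmax_ub (map_f g' ir); have := le_trans (ler_norm _) (fg i); lra.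
move=> r_nil fg; rewrite ler_norml lerNl opprB !half_dist // => i.
by rewrite distrC.
Qed.

End SeqMax.

Lemma expR_sub_le (R : realType) (u v : R) : expR u - expR v <= expR u * (u - v).
Proof.
have := ler_wpM2l (expR_ge0 u) (expR_ge1Dx (v - u)).
by rewrite -expRD (addrC u) subrK mulrDr mulr1; lra.
Qed.

Lemma expR_dist_le (R : realType) (c u v : R) : u <= c -> v <= c ->
  `|expR u - expR v| <= expR c * `|u - v|.
Proof.
wlog vu : u v / v <= u => [wlog_vu|uc _].
  by case: (leP v u) => [|/ltW] ? ? ?; [|rewrite distrC (distrC u)]; exact: wlog_vu.
rewrite !ger0_norm ?subr_ge0 ?ler_expR //.
by rewrite (le_trans (expR_sub_le u v)) // ler_wpM2r ?subr_ge0 ?ler_expR.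
Qed.

Section Stability.
Variable R : realType.

Definition approx_bound m n (K E : R) (f : 'cV[R]_m -> 'cV[R]_n)
    (f_ : nat -> 'cV[R]_m -> 'cV[R]_n)
    (ok : 'cV[R]_m -> Prop) (ok_ : nat -> 'cV[R]_m -> Prop) :=
  [/\ 0 <= K, 0 <= E & forall a, (4 <= a)%N -> forall x x', ok x -> ok_ a x' ->
     normInf (f_ a x' - f x) <= K * normInf (x' - x) + E * 2 ^- a].

Definition approximable m n (f : 'cV[R]_m -> 'cV[R]_n)
    (f_ : nat -> 'cV[R]_m -> 'cV[R]_n)
    (ok : 'cV[R]_m -> Prop) (ok_ : nat -> 'cV[R]_m -> Prop) :=
  exists K E, approx_bound K E f f_ ok ok_.

Lemma approximable_lip_err m n (f : 'cV[R]_m -> 'cV[R]_n) f_ ok ok_ (K E : R) :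
  0 <= K -> 0 <= E ->
  (forall a x x', ok x -> ok_ a x' -> normInf (f x' - f x) <= K * normInf (x' - x)) ->
  (forall a, (4 <= a)%N -> forall x, ok_ a x -> normInf (f_ a x - f x) <= E * 2 ^- a) ->
  approximable f f_ ok ok_.
Proof.
move=> K0 E0 f_lip f_err; exists K, E; split=> // a a_ge4 x x' ok_x ok_x'.
have -> : f_ a x' - f x = (f x' - f x) + (f_ a x' - f x') by rewrite [RHS]addrC addrA subrK.
apply: le_trans (normInfD _ _) _.
by apply: lerD; [exact: f_lip ok_x ok_x' | exact: f_err].
Qed.

Lemma approximable_exact m n (f : 'cV[R]_m -> 'cV[R]_n) ok ok_ (K : R) :
  0 <= K ->
  (forall a x x', ok x -> ok_ a x' -> normInf (f x' - f x) <= K * normInf (x' - x)) ->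
  approximable f (fun=> f) ok ok_.
Proof.
move=> K0 f_lip; apply: (approximable_lip_err (E := 0)) f_lip _ => // a _ x _.
by rewrite subrr normInf0 mul0r.
Qed.

Lemma chain_approximable (T : nat -> nat -> Type)
    (f : forall m n, T m n -> 'cV[R]_m -> 'cV[R]_n)
    (f_ : nat -> forall m n, T m n -> 'cV[R]_m -> 'cV[R]_n)
    (ok : forall m n, T m n -> 'cV[R]_m -> Prop)
    (ok_ : nat -> forall m n, T m n -> 'cV[R]_m -> Prop) :
  (forall m n (b : T m n),
     approximable (f m n b) (fun a => f_ a m n b) (ok m n b) (fun a => ok_ a m n b)) ->
  forall m n (c : chain T m n),
    approximable (chain_eval f c) (fun a => chain_eval (f_ a) c)
      (chain_ok f ok c) (fun a => chain_ok (f_ a) (ok_ a) c).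
Proof.
move=> T_approx m n; elim=> [{}m {}n b|{}m k {}n b c [K2 [E2 [K2_0 E2_0 c_bound]]]].
  exact: T_approx.
have [K1 [E1 [K1_0 E1_0 b_bound]]] := T_approx _ _ b.
exists (K2 * K1), (K2 * E1 + E2); split; rewrite ?addr_ge0 ?mulr_ge0 //.
move=> a a_ge4 x x' /= [ok_x ok_c] [ok_x' ok_c'].
rewrite (le_trans (c_bound a a_ge4 _ _ ok_c ok_c')) //.
have -> : K2 * K1 * normInf (x' - x) + (K2 * E1 + E2) * 2 ^- a =
    K2 * (K1 * normInf (x' - x) + E1 * 2 ^- a) + E2 * 2 ^- a by ring.
by rewrite lerD2r ler_wpM2l ?b_bound.
Qed.

Lemma approximable_add_mulmx m n (f : 'cV[R]_m -> 'cV[R]_n) f_ ok ok_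
    (P : 'M[R]_(n, m)) :
  approximable f f_ ok ok_ ->
  approximable (fun x => f x + P *m x) (fun a x => f_ a x + P *m x) ok ok_.
Proof.
move=> [K [E [K_ge0 E_ge0 f_bound]]]; exists (K + mx_abs_sum P), E.
split; rewrite ?addr_ge0 ?mx_abs_sum_ge0 // => a a_ge4 x x' ok_x ok_x'.
rewrite opprD addrACA -mulmxBr (le_trans (normInfD _ _)) //.
by rewrite mulrDl addrAC lerD ?f_bound ?normInf_mulmx.
Qed.

End Stability.

Section Softmax.
Variable R : realType.

Lemma sum_expR_ge n (x : 'cV[R]_n) j : expR (x j 0) <= \sum_k expR (x k 0).
Proof. by rewrite (bigD1 j) //= lerDl; apply: sumr_ge0 => k _; apply: expR_ge0. Qed.

Lemma sum_expR_gt0 n (x : 'cV[R]_n) (j : 'I_n) : 0 < \sum_k expR (x k 0).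
Proof. exact: lt_le_trans (expR_gt0 _) (sum_expR_ge x j). Qed.

Lemma invr_sum_expR_le n (x : 'cV[R]_n) c (j : 'I_n) :
  normInf x <= c -> (\sum_k expR (x k 0))^-1 <= expR c.
Proof.
move=> x_le; apply: le_trans (_ : _ <= (expR (x j 0))^-1) _.
  by rewrite lef_pV2 ?posrE ?expR_gt0 ?(sum_expR_gt0 x j) ?sum_expR_ge.
rewrite -expRN ler_expR lerNl.
by have := le_trans (normInf_ge_coord x j) x_le; rewrite ler_norml => /andP[].
Qed.

Lemma expR_coord_dist n (x x' : 'cV[R]_n) c j : normInf x <= c -> normInf x' <= c ->
  `|expR (x' j 0) - expR (x j 0)| <= expR c * normInf (x' - x).
Proof.
have coord_le (y : 'cV[R]_n) : normInf y <= c -> y j 0 <= c.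
  by move/(le_trans (normInf_ge_coord y j)); rewrite ler_norml => /andP[].
move=> /coord_le x_le /coord_le x'_le.
apply: le_trans (expR_dist_le x'_le x_le) _.
by rewrite ler_wpM2l ?expR_ge0 ?normInf_ge_coordB.
Qed.

Lemma softmax_lip n (x x' : 'cV[R]_n) c :
  normInf x <= c -> normInf x' <= c ->
  normInf (softmax x' - softmax x) <= (1 + n%:R) * expR c * expR c * normInf (x' - x).
Proof.
move=> x_le x'_le; set d := normInf (x' - x); set ec := expR c.
have ec_ge0 : 0 <= ec := expR_ge0 c.
apply: normInf_le => [|i]; first by rewrite !mulr_ge0 ?addr_ge0 ?normInf_ge0.
rewrite !mxE; set s' := \sum_j _; set s := \sum_j _.
set e := expR (x i 0); set e' := expR (x' i 0).
have s_gt0 : 0 < s := sum_expR_gt0 x i.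
have s'V_ge0 : 0 <= s'^-1 by rewrite invr_ge0 ltW ?(sum_expR_gt0 x' i).
have s'V_le : s'^-1 <= ec := invr_sum_expR_le i x'_le.
have q_ge0 : 0 <= e / s := divr_ge0 (expR_ge0 _) (ltW s_gt0).
have q_le1 : e / s <= 1 by rewrite ler_pdivrMr // mul1r sum_expR_ge.
have de : `|e' - e| <= ec * d := expR_coord_dist i x_le x'_le.
have ds : `|s - s'| <= n%:R * (ec * d).
  rewrite -sumrB (le_trans (ler_norm_sum _ _ _)) //.
  apply: le_trans (_ : \sum_(j < n) ec * d <= _); last first.
    by rewrite sumr_const card_ord mulr_natl.
  by apply: ler_sum => j _; rewrite distrC expR_coord_dist.
have -> : e' / s' - e / s = (e' - e) * s'^-1 + (e / s) * (s - s') * s'^-1.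
  by field; rewrite !gt_eqF ?(sum_expR_gt0 x' i).
have first_le : `|(e' - e) * s'^-1| <= ec * d * ec.
  by rewrite normrM (ger0_norm s'V_ge0) ler_pM.
have second_le : `|e / s * (s - s') * s'^-1| <= 1 * (n%:R * (ec * d)) * ec.
  rewrite normrM [`|e / s * _|]normrM (ger0_norm s'V_ge0) (ger0_norm q_ge0).
  have q_ds : e / s * `|s - s'| <= 1 * (n%:R * (ec * d)) by apply: ler_pM.
  by apply: ler_pM => //; rewrite mulr_ge0.
have -> : (1 + n%:R) * ec * ec * d = ec * d * ec + 1 * (n%:R * (ec * d)) * ec by ring.
exact: le_trans (ler_normD _ _) (lerD first_le second_le).
Qed.

End Softmax.

Section Blocks.
Variable R : realType.
Variable pa : nat -> {poly R}.
Hypothesis m_alpha_err : forall (a : nat) (x y : R), 0 <= x <= 1 -> 0 <= y <= 1 ->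
  `|m_alpha pa a x y - Num.max x y| <= 2 ^- a.

(* r_alpha t = m_alpha t 0, and also r_alpha t = m_alpha 0 (-t) + t while
   max t 0 = max 0 (-t) + t. *)
Lemma r_alpha_err a t : `|t| <= 1 -> `|r_alpha pa a t - Num.max t 0| <= 2 ^- a.
Proof.
rewrite ler_norml => /andP[t_ge t_le]; have [t_ge0|t_lt0] := leP 0 t.
  have := @m_alpha_err a t 0; rewrite /m_alpha /r_alpha addr0 subr0 (max_l t_ge0).
  by apply; lra.
have := @m_alpha_err a 0 (- t); rewrite /m_alpha /r_alpha add0r sub0r opprK max_r; last lra.
have -> : (t + t * (pa a).[t]) / 2 - 0 = (- t + t * (pa a).[t]) / 2 - - t by field.
by apply; lra.
Qed.

Lemma m_alpha_perturb a (u v x y del : R) :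
  `|u - x| <= del -> `|v - y| <= del -> del <= x <= 1 - del -> del <= y <= 1 - del ->
  `|m_alpha pa a u v - Num.max x y| <= del + 2 ^- a.
Proof.
have in01 w z : `|w - z| <= del -> del <= z <= 1 - del -> 0 <= w <= 1.
  by rewrite ler_norml => /andP[? ?] /andP[? ?]; apply/andP; split; lra.
move=> ux vy x_in y_in.
have -> : m_alpha pa a u v - Num.max x y =
    (Num.max u v - Num.max x y) + (m_alpha pa a u v - Num.max u v) by ring.
apply: le_trans (ler_normD _ _) _.
by rewrite lerD ?max_dist ?m_alpha_err ?(in01 u x) ?(in01 v y).
Qed.

Lemma Mtree1 a fuel (y : R) : Mtree pa a fuel [:: y] = y.
Proof. by case: fuel. Qed.

Lemma Mtree_split a fuel (s : seq R) : (1 < size s)%N ->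
  Mtree pa a fuel.+1 s = m_alpha pa a (Mtree pa a fuel (take (size s)./2 s))
                                      (Mtree pa a fuel (drop (size s)./2 s)).
Proof. by move=> s_gt1; rewrite /= leqNgt s_gt1. Qed.

Lemma Mtree_err a d fuel (s : seq R) :
  s != [::] -> (size s <= fuel)%N -> (size s <= 2 ^ d)%N ->
  {in s, forall x, (d%:R - 1) * 2 ^- a <= x <= 1 - (d%:R - 1) * 2 ^- a} ->
  `|Mtree pa a fuel s - seqmax s| <= d%:R * 2 ^- a.
Proof.
have e_ge0 : 0 <= 2 ^- a :> R by rewrite invr_ge0 exprn_ge0.
elim: d fuel s => [|d IH] fuel s s_nil s_fuel s_pow s_in;
  have [s_le1|s_gt1] := leqP (size s) 1.
1,3: case: s s_nil s_le1 {s_fuel s_pow s_in} => [|y []] // _ _.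
1,2: by rewrite Mtree1 seqmax1 subrr normr0 mulr_ge0.
  by move: s_gt1 s_pow; rewrite expn0; lia.
case: fuel s_fuel => [|fuel] s_fuel; first by move: s_gt1 s_fuel; lia.
rewrite Mtree_split // expnS in s_pow *; set h := (size s)./2.
have h_half : h = (size s %/ 2)%N by rewrite divn2.
have size_take : size (take h s) = h by rewrite size_takel // h_half; lia.
have size_drop : size (drop h s) = (size s - h)%N by rewrite size_drop.
have in_d : {in s, forall x, d%:R * 2 ^- a <= x <= 1 - d%:R * 2 ^- a}.
  by move=> x /s_in; rewrite -natr1 addrK.
have in_weak : {in s, forall x, (d%:R - 1) * 2 ^- a <= x <= 1 - (d%:R - 1) * 2 ^- a}.
  by move=> x /in_d /andP[? ?]; apply/andP; split; lra.
have take_err : `|Mtree pa a fuel (take h s) - seqmax (take h s)| <= d%:R * 2 ^- a.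
  by apply: IH => [||| x /mem_take /in_weak //]; rewrite -?size_eq0 size_take; lia.
have drop_err : `|Mtree pa a fuel (drop h s) - seqmax (drop h s)| <= d%:R * 2 ^- a.
  by apply: IH => [||| x /mem_drop /in_weak //]; rewrite -?size_eq0 size_drop; lia.
have take_nil : take h s != [::] by rewrite -size_eq0 size_take h_half; lia.
have drop_nil : drop h s != [::] by rewrite -size_eq0 size_drop h_half; lia.
rewrite -{3}(cat_take_drop h s) seqmax_cat // -natr1 mulrDl mul1r.
by apply: m_alpha_perturb; rewrite // in_d //;
  [exact: mem_take (seqmax_mem take_nil) | exact: mem_drop (seqmax_mem drop_nil)].
Qed.

Variable B : R.
Hypothesis B_gt0 : 0 < B.

Lemma rt_alpha_err a t : `|t| <= B -> `|rt_alpha pa a B t - Num.max t 0| <= B * 2 ^- a.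
Proof.
move=> t_le; have B_neq0 : B != 0 by rewrite gt_eqF.
have -> : Num.max t 0 = B * Num.max (t / B) 0 by rewrite maxr_pMr ?ltW // mulr0 mulrCA divff ?mulr1.
rewrite /rt_alpha -mulrBr normrM (gtr0_norm B_gt0) ler_wpM2l ?(ltW B_gt0) // r_alpha_err //.
by rewrite normrM normfV (gtr0_norm B_gt0) ler_pdivrMr // mul1r.
Qed.

Lemma Mt_alpha_err_rescaled a (s : seq R) (D : R) :
  D = 2^-1 - ((up_log 2 (size s))%:R - 1) * 2 ^- a -> 0 < D -> s != [::] ->
  {in s, forall y, `|y| <= B} ->
  `|Mt_alpha pa a (size s) B s - seqmax s| <= B / D * ((up_log 2 (size s))%:R * 2 ^- a).
Proof.
move=> D_def D_gt0 s_nil s_le; rewrite /Mt_alpha -D_def /M_alpha.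
set L := up_log 2 (size s) in D_def *; set B' := B / D.
have B'_gt0 : 0 < B' by rewrite divr_gt0.
set s' := map _ s.
have s'_max : seqmax s' = seqmax s / B' + 2^-1.
  by apply: seqmax_map_homo => // x y xy; rewrite lerD2r ler_pM2r ?invr_gt0.
have s'_in : {in s', forall z, (L%:R - 1) * 2 ^- a <= z <= 1 - (L%:R - 1) * 2 ^- a}.
  move=> _ /mapP[y ys ->].
  have : `|y / B| <= 1.
    by rewrite normrM normfV (gtr0_norm B_gt0) ler_pdivrMr // mul1r s_le.
  have -> : y / B' = y / B * D by rewrite /B' invf_div mulrA mulrAC.
  rewrite ler_norml; move: (y / B) => t /andP[t_ge t_le].
  have : - D <= t * D <= D by apply/andP; split; nra.
  by rewrite D_def => /andP[? ?]; apply/andP; split; lra.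
have s'_err : `|Mtree pa a (size s') s' - seqmax s'| <= L%:R * 2 ^- a.
  by apply: Mtree_err; rewrite // ?size_map ?up_logP // -size_eq0 size_map size_eq0.
have -> : B' * (Mtree pa a (size s') s' - 2^-1) - seqmax s =
    B' * (Mtree pa a (size s') s' - seqmax s').
  by rewrite s'_max; field; rewrite gt_eqF.
by rewrite normrM (gtr0_norm B'_gt0) ler_wpM2l // ltW.
Qed.

Lemma Mt_alpha_err a k (s : seq R) :
  (4 <= a)%N -> (up_log 2 k <= 7)%N -> size s = k -> s != [::] ->
  {in s, forall y, `|y| <= B} ->
  `|Mt_alpha pa a k B s - seqmax s| <= 56 * B * 2 ^- a.
Proof.
move=> a_ge4 L_le7 s_size; subst k => s_nil s_le; set L := up_log 2 (size s) in L_le7 *.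
have e_ge0 : 0 <= 2 ^- a :> R by rewrite invr_ge0 exprn_ge0.
have e_le := exp2N_le16 R a_ge4.
have L_le7r : L%:R <= 7 :> R by rewrite ler_nat.
have L_ge0 : 0 <= L%:R :> R := ler0n _ _.
have D_ge : 8^-1 <= 2^-1 - (L%:R - 1) * 2 ^- a :> R by nra.
have D_gt0 : 0 < 2^-1 - (L%:R - 1) * 2 ^- a :> R by apply: lt_le_trans D_ge; lra.
apply: le_trans (Mt_alpha_err_rescaled erefl D_gt0 s_nil s_le) _.
set D := 2^-1 - _ in D_ge D_gt0 *.
have BD_le : B / D <= 8 * B.
  by rewrite ler_pdivrMr //; have := ler_wpM2l (ltW B_gt0) D_ge; lra.
have -> : 56 * B * 2 ^- a = 8 * B * (7 * 2 ^- a) by ring.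
apply: ler_pM => //; first exact: divr_ge0 (ltW B_gt0) (ltW D_gt0).
  exact: mulr_ge0.
exact: ler_wpM2r.
Qed.

Let approx_basic m n (b : basic R m n) :=
  approximable (basic_eval b) (fun a => basic_approx pa a B b)
    (basic_ok B b) (fun=> basic_ok B b).

Lemma linear_approximable m n (A : 'M[R]_(n, m)) c : approx_basic (BLinear A c).
Proof.
apply: (approximable_exact (mx_abs_sum_ge0 A)) => a x x' _ _ /=.
by rewrite opprD addrACA subrr addr0 -mulmxBr normInf_mulmx.
Qed.

Lemma relu_approximable n : approx_basic (BReLU R n).
Proof.
apply: (approximable_lip_err (K := 1) (E := B)) => //=; first exact: ltW.
- move=> a x x' _ _; rewrite mul1r; apply: normInf_le => [|i]; rewrite ?normInf_ge0 // !mxE.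
  by apply: max_dist; rewrite ?normInf_ge_coordB // subrr normr0 normInf_ge0.
- move=> a _ x x_le; apply: normInf_le => [|i].
    by rewrite mulr_ge0 ?invr_ge0 ?exprn_ge0 ?ltW.
  by rewrite !mxE rt_alpha_err // (le_trans (normInf_ge_coord x i)).
Qed.

Lemma maxpool_approximable p q k0 (hk : (0 < k0 <= 10)%N)
    (w : 'I_q -> 'I_(k0 ^ 2) -> 'I_p) :
  approx_basic (BMaxPool R hk w).
Proof.
have k_gt0 : (0 < k0 ^ 2)%N by case/andP: hk => k0_gt0 _; rewrite expn_gt0 k0_gt0.
have enum_nil : enum 'I_(k0 ^ 2) != [::] by rewrite -size_eq0 size_enum_ord -lt0n.
apply: (approximable_lip_err (K := 1) (E := 56 * B)) => //=.
- by rewrite mulr_ge0 // ltW.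
- move=> a x x' _ _; rewrite mul1r; apply: normInf_le => [|j]; rewrite ?normInf_ge0 // !mxE.
  by apply: seqmax_dist => // i; apply: normInf_ge_coordB.
move=> a a_ge4 x x_le; apply: normInf_le => [|j].
  by rewrite !mulr_ge0 ?invr_ge0 ?exprn_ge0 ?ltW.
rewrite !mxE; apply: Mt_alpha_err => //.
- apply: up_log_min => //; have /andP[_ k0_le10] := hk.
  by rewrite (leq_trans (leq_mul k0_le10 k0_le10)).
- by rewrite size_map size_enum_ord.
- by rewrite -size_eq0 size_map size_eq0.
by move=> _ /mapP[i _ ->]; rewrite (le_trans (normInf_ge_coord x (w j i))).
Qed.

Lemma softmax_approximable n : approx_basic (BSoftmax R n).
Proof.
apply: (approximable_exact (K := (1 + n%:R) * expR B * expR B)).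
  by rewrite !mulr_ge0 ?addr_ge0 ?expR_ge0.
by move=> a x x' x_le x'_le; apply: softmax_lip.
Qed.

Lemma basic_approximable m n (b : basic R m n) : approx_basic b.
Proof.
case: b => *; [exact: linear_approximable | exact: relu_approximable |
  exact: maxpool_approximable | exact: softmax_approximable].
Qed.

Lemma block_approximable m n (b : block R m n) :
  approximable (block_eval b) (fun a => block_approx pa a B b)
    (block_ok_exact B b) (fun a => block_ok_approx pa a B b).
Proof.
case: b => [{}m {}n b|{}m {}n G P] /=; first exact: basic_approximable.
apply: approximable_add_mulmx.
exact: chain_approximable basic_approximable _ _ G.
Qed.

End Blocks.

Theorem theorem5 (R : realType) (pa : nat -> {poly R})
  (hp : forall (a : nat) (x y : R), 0 <= x <= 1 -> 0 <= y <= 1 ->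
          `|m_alpha pa a x y - Num.max x y| <= 2 ^- a)
  (B : R) (hB : 1 < B) (m n : nat) (F : model R m n) :
  exists C : R, forall a : nat, (4 <= a)%N ->
    forall x : 'cV[R]_m,
      inputs_bounded_exact B F x ->
      inputs_bounded_approx pa a B F x ->
      normInf (model_approx pa a B F x - model_eval F x) <= C * 2 ^- a.
Proof.
have B_gt0 : 0 < B := lt_trans ltr01 hB.
have [K [E [_ _ F_bound]]] :=
  chain_approximable (block_approximable hp B_gt0) F.
exists E => a a_ge4 x x_ok x_ok'.
by have := F_bound a a_ge4 x x x_ok x_ok'; rewrite subrr normInf0 mulr0 add0r.
Qed.
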